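(* For every oriented virtual knot diagram $K$, $\gamma(K)=a+(2k)t$ for some integers $a$ and $k$; that is, the coefficient of $t$ in $\gamma(K)$ is even.
   Context: For an oriented virtual knot diagram $K$ and a classical crossing $c$ with sign $sgn(c)\in\{\pm1\}$, let $K_c$ be the two-component oriented virtual link diagram obtained by smoothing $c$ in the orientation-respecting way. Let $L(K_c)$ be the sum of the signs of all classical crossings of $K_c$ at which the two strands belong to different components, and $\bar L(K_c)=L(K_c)\bmod 2\in\{0,1\}$. Define $\gamma(K)=\sum_{c} t^{\bar L(K_c)}\,sgn(c)$, summing over all classical crossings, an element of the free $\mathbb{Z}$-module on $\{1,t\}$. *)

From mathcomp Require Import all_boot all_order all_algebra.
Unset Printing Implicit Defensive.
Import GRing.Theory Num.Theory.
Local Open Scope ring_scope.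

(* An oriented virtual knot diagram is encoded by its Gauss diagram
   (virtual crossings are invisible).  [gword] lists, in the order met when
   travelling along the knot from a base point, the passages through the
   classical crossings: (c, true) = over-passage at crossing c,
   (c, false) = under-passage at crossing c.  [gsign c] is the sign of c
   (true = +1, false = -1). *)
Record gauss_diagram := GaussDiagram {
  gn : nat;
  gword : seq ('I_gn * bool);
  gsign : 'I_gn -> bool
}.

Definition gauss_wf (K : gauss_diagram) : Prop :=
  forall c : 'I_(gn K),
    count (pred1 (c, true)) (gword K) = 1%N /\
    count (pred1 (c, false)) (gword K) = 1%N.

Definition sgn (K : gauss_diagram) (c : 'I_(gn K)) : int :=
  if gsign K c then 1 else -1.

Definition pos_over (K : gauss_diagram) (c : 'I_(gn K)) : nat :=
  index (c, true) (gword K).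
Definition pos_under (K : gauss_diagram) (c : 'I_(gn K)) : nat :=
  index (c, false) (gword K).

(* Orientation-respecting smoothing at c: the knot is cut at the two passages
   through c, giving two components: the arc strictly between the two
   passages (component [true]) and the complementary arc (component [false]).
   [smooth_comp K c p] is the component of K_c containing the passage at
   position p (p different from the two positions of c). *)
Definition smooth_comp (K : gauss_diagram) (c : 'I_(gn K)) (p : nat) : bool :=
  let lo := minn (pos_over K c) (pos_under K c) in
  let hi := maxn (pos_over K c) (pos_under K c) in
  (lo < p < hi)%N.

Definition mixed_crossing (K : gauss_diagram) (c d : 'I_(gn K)) : bool :=
  (d != c) &&
  (smooth_comp K c (pos_over K d) != smooth_comp K c (pos_under K d)).

Definition Lsmooth (K : gauss_diagram) (c : 'I_(gn K)) : int :=
  \sum_(d : 'I_(gn K) | mixed_crossing K c d) sgn K d.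

Definition Lbar (K : gauss_diagram) (c : 'I_(gn K)) : nat :=
  odd `|Lsmooth K c|%N.

(* gamma(K) = \sum_c t^{\bar L(K_c)} sgn(c), as an integer polynomial in t
   (its values lie in the free Z-module on {1, t}) *)
Definition gamma (K : gauss_diagram) : {poly int} :=
  \sum_(c : 'I_(gn K)) (sgn K c)%:P * 'X ^+ Lbar K c.

From mathcomp Require Import all_boot all_order all_algebra.
From mathcomp Require Import zify.

Set Implicit Arguments.
Unset Strict Implicit.
Unset Printing Implicit Defensive.
Import GRing.Theory Num.Theory.
Local Open Scope ring_scope.

(* Mod 2, t^{\bar L(K_c)} only sees the number of mixed crossings of K_c, i.e.
   the degree of c in the graph joining c and d when the chords of c and d
   interlace in the Gauss diagram.  Interlacing is symmetric, so by the
   handshake lemma an even number of crossings have odd degree; the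
   coefficient of t is a sum of that many signs +-1, hence even. *)

Definition strictly_between (a b p : nat) : bool := (minn a b < p < maxn a b)%N.

Lemma interlacedC (a b p q : nat) : uniq [:: a; b; p; q] ->
  (strictly_between a b p != strictly_between a b q) =
  (strictly_between p q a != strictly_between p q b).
Proof.
rewrite /= !inE !negb_or /strictly_between /minn /maxn.
case: (ltngtP a b) => //; case: (ltngtP a p) => //; case: (ltngtP a q) => //;
case: (ltngtP b p) => //; case: (ltngtP b q) => //; case: (ltngtP p q) => //= *;
lia.
Qed.

Lemma handshake (T : finType) (r : rel T) : symmetric r -> irreflexive r ->
  ~~ odd (\sum_x #|[pred y | r x y]|).
Proof.
move=> rC rI.
pose half (x y : T) : nat := r x y && (enum_rank x < enum_rank y)%N.
have split_r x y : r x y = (half x y + half y x)%N :> nat.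
  rewrite /half (rC y x); have [<-|nxy] := eqVneq x y; first by rewrite rI ltnn.
  have : enum_rank x != enum_rank y by apply: contra_neq nxy; apply: enum_rank_inj.
  by rewrite neq_ltn; case: (r x y); case/orP=> lt_xy; rewrite lt_xy ltnNge ltnW.
have -> : (\sum_x #|[pred y | r x y]| = \sum_x \sum_y half x y + \sum_x \sum_y half y x)%N.
  rewrite -big_split; apply: eq_bigr => x _.
  rewrite -sum1_card big_mkcond -big_split /=; apply: eq_bigr => y _.
  by rewrite -split_r inE.
by rewrite [in X in (_ + X)%N]exchange_big addnn odd_double.
Qed.

Lemma odd_card_odd (T : finType) (F : T -> nat) :
  odd #|[pred x | odd (F x)]| = odd (\sum_x F x).
Proof.
rewrite -sum1_card big_mkcond /=.
apply: (big_ind2 (fun m n : nat => odd m = odd n)) => //.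
  by move=> m1 m2 n1 n2 e1 e2; rewrite !oddD e1 e2.
by move=> x _; rewrite inE; case: (odd (F x)).
Qed.

Corollary even_card_odd_degree (T : finType) (r : rel T) :
  symmetric r -> irreflexive r -> ~~ odd #|[pred x | odd #|[pred y | r x y]|]|.
Proof. by move=> rC rI; rewrite odd_card_odd handshake. Qed.

Lemma odd_abs_sum (I : Type) (s : seq I) (P : pred I) (F : I -> int) :
  odd `|\sum_(i <- s | P i) F i| = odd (\sum_(i <- s | P i) `|F i|).
Proof.
apply: (big_ind2 (fun (x : int) (n : nat) => odd `|x| = odd n)) => //.
by move=> x1 x2 n1 n2 e1 e2; rewrite oddD -e1 -e2; lia.
Qed.

Lemma abs_sgn (K : gauss_diagram) (c : 'I_(gn K)) : `|sgn K c|%N = 1%N.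
Proof. by rewrite /sgn; case: gsign. Qed.

Lemma gauss_wf_mem (K : gauss_diagram) :
  gauss_wf K -> forall (c : 'I_(gn K)) (b : bool), (c, b) \in gword K.
Proof.
move=> wf c b; have [over under] := wf c; rewrite -has_pred1 has_count.
by case: b; rewrite ?over ?under.
Qed.

Lemma smooth_compE (K : gauss_diagram) (c : 'I_(gn K)) (p : nat) :
  smooth_comp K c p = strictly_between (pos_over K c) (pos_under K c) p.
Proof. by []. Qed.

Lemma mixed_crossing_irr (K : gauss_diagram) : irreflexive (mixed_crossing K).
Proof. by move=> c; rewrite /mixed_crossing eqxx. Qed.

Lemma mixed_crossingC (K : gauss_diagram) :
  gauss_wf K -> symmetric (mixed_crossing K).
Proof.
move=> wf c d; rewrite /mixed_crossing eq_sym.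
have [//|ndc] := eqVneq d c.
have index_neq (u v : 'I_(gn K) * bool) : u != v -> index u (gword K) != index v (gword K).
  case: u v => [u bu] [v bv]; apply: contra_neq.
  exact: (index_inj (c, true) (gauss_wf_mem wf u bu) (gauss_wf_mem wf v bv)).
rewrite !smooth_compE interlacedC //=.
rewrite !inE !negb_or /pos_over /pos_under.
by rewrite !index_neq //; rewrite xpair_eqE ?(eq_sym c d) ?(negbTE ndc) ?andbF.
Qed.

Lemma Lbar_odd_degree (K : gauss_diagram) (c : 'I_(gn K)) :
  Lbar K c = odd #|[pred d | mixed_crossing K c d]|.
Proof.
by rewrite /Lbar /Lsmooth odd_abs_sum (eq_bigr _ (fun d _ => abs_sgn d)) sum1_card.
Qed.

Theorem mainTheorem2 (K : gauss_diagram) :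
  gauss_wf K ->
  exists a k : int, gamma K = a%:P + (2 * k)%:P * 'X.
Proof.
move=> wf.
pose odd_deg := [pred c | odd #|[pred d | mixed_crossing K c d]|].
have [k t_coef] : exists k : int, \sum_(c in odd_deg) sgn K c = 2 * k.
  have : (2 %| \sum_(c in odd_deg) sgn K c)%Z.
    rewrite dvdzE dvdn2 odd_abs_sum (eq_bigr _ (fun d _ => abs_sgn d)) sum1_card.
    exact: even_card_odd_degree (mixed_crossingC wf) (@mixed_crossing_irr K).
  by case/dvdzP=> k ->; exists k; rewrite mulrC.
exists (\sum_(c | ~~ odd_deg c) sgn K c), k.
rewrite -t_coef /gamma (bigID odd_deg) /= addrC !rmorph_sum big_distrl /=.
congr (_ + _); apply: eq_bigr => c; rewrite Lbar_odd_degree.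
  by move=> /= /negbTE ->; rewrite mulr1.
by move=> /= ->.
Qed.
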